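(* Let $r,m\in\mathbb{N}$ with $r\ge1$, and let $G$ be a graph in which every vertex has finite $(r,m)$-rank. Then $\mathrm{adm}_r(G)\le m$.
   Context: Admissibility: for a linear order $\le$ on $V(G)$, the $r$-backconnectivity of a vertex $v$ is the maximum number of paths with at least one and at most $r$ edges that start at $v$, end at vertices $w\ge v$, and are pairwise vertex-disjoint except for their common endpoint $v$. $\mathrm{adm}_r(G)$ is the minimum over all linear orders of $V(G)$ of the maximum $r$-backconnectivity of a vertex. $N_r^G(v)$ is the closed $r$-neighborhood of $v$; $G-S$ is the subgraph induced on $V(G)\setminus S$. The $(r,m)$-rank of vertices of $G$ (values in $\mathbb{N}\cup\{\infty\}$) is defined by: initially every vertex has rank $\infty$; in rounds $i=1,2,\dots$, every vertex $v$ currently of rank $\infty$ receives rank $i$ if there exists $S\subseteq V(G)\setminus\{v\}$ with $|S|\le m$ such that every vertex of $N_r^{G-S}(v)\setminus\{v\}$ received a finite rank in rounds $1,\dots,i-1$; the procedure stops when all ranks are finite or a round assigns no new rank. *)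

From HB Require Import structures.
From mathcomp Require Import all_boot.
From mathcomp Require Import fingroup perm.
From mathcomp Require Import boolp.
Set Implicit Arguments. Unset Strict Implicit. Unset Printing Implicit Defensive.

Definition simple_graph (T : finType) (e : rel T) : Prop :=
  symmetric e /\ irreflexive e.

Section Defs.
Variables (T : finType) (e : rel T).

(* closed k-neighbourhood of v in G - S (v assumed not in S):
   vertices reachable from v by a walk of at most k edges avoiding S *)
Fixpoint nbhd_del (S : {set T}) (k : nat) (v : T) : {set T} :=
  match k with
  | 0 => [set v]
  | k'.+1 => nbhd_del S k' v :|:
             [set u | (u \notin S) && [exists w in nbhd_del S k' v, e w u]]
  end.

(* ranked r m i = set of vertices whose (r,m)-rank is finite and <= i *)
Fixpoint ranked (r m : nat) (i : nat) : {set T} :=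
  match i with
  | 0 => set0
  | i'.+1 => ranked r m i' :|:
      [set v | [exists S : {set T},
                 [&& v \notin S, #|S| <= m &
                     (nbhd_del S r v :\ v) \subset ranked r m i']]]
  end.

Definition finite_rank (r m : nat) (v : T) : Prop := exists i, v \in ranked r m i.

(* linear orders on T, represented by permutations sigma of T:
   x <=_sigma y iff the enumeration rank of sigma x is <= that of sigma y *)
Definition ord_le (sigma : {perm T}) (x y : T) : bool :=
  (enum_rank (sigma x) <= enum_rank (sigma y))%N.

Definition back_path (sigma : {perm T}) (r : nat) (v : T) (p : seq T) : bool :=
  match p with
  | [::] => false
  | x :: q => [&& x == v, 0 < size q <= r, path e v q, uniq p &
                  ord_le sigma v (last v q)]
  end.

Definition back_family (sigma : {perm T}) (r : nat) (v : T) (n : nat) : Prop :=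
  exists s : seq (seq T),
    [/\ size s = n, all (back_path sigma r v) s &
        forall i j x, (i < j < size s)%N ->
          x \in nth [::] s i -> x \in nth [::] s j -> x = v].

(* r-backconnectivity (the number of such paths is always <= #|T|, since the
   endpoints are pairwise distinct, so the maximum is taken over n <= #|T|) *)
Definition backconn (sigma : {perm T}) (r : nat) (v : T) : nat :=
  \max_(n < #|T|.+1 | `[< back_family sigma r v n >]) n.

Definition adm (r : nat) : nat :=
  \big[minn/#|T|]_(sigma : {perm T}) \max_(v : T) backconn sigma r v.

End Defs.

From mathcomp Require Import all_boot fingroup perm.
From mathcomp Require Import boolp.

Set Implicit Arguments.
Unset Strict Implicit.
Unset Printing Implicit Defensive.

(** Order the vertices by nondecreasing (r,m)-rank. If v has rank i, there is
    a set S of at most m vertices, not containing v, such that every other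
    vertex reachable from v by at most r edges in G - S has rank < i and so lies
    before v. Hence every path of at most r edges from v to a vertex w >= v
    meets S, and paths that are disjoint outside v meet S in distinct vertices,
    so the r-backconnectivity of v is at most |S| <= m. *)

Lemma bigminn_leq (I : finType) (F : I -> nat) d x :
  \big[minn/d]_(i : I) F i <= F x.
Proof.
move: (mem_index_enum x); elim: (index_enum I) => //= i s IHs.
rewrite big_cons inE => /predU1P[-> | xs]; first exact: geq_minl.
exact: leq_trans (geq_minr _ _) (IHs xs).
Qed.

Section Neighbourhood.
Variables (T : finType) (e : rel T) (S : {set T}).

Lemma nbhd_del_self k v : v \in nbhd_del e S k v.
Proof. by elim: k => [|k IHk] /=; rewrite !inE ?IHk. Qed.

Lemma path_last_nbhd_del v q k :
  path e v q -> all (fun u => u \notin S) q -> size q <= k ->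
  last v q \in nbhd_del e S k v.
Proof.
elim/last_ind: q k => [|q x IHq] k; first by rewrite nbhd_del_self.
rewrite rcons_path all_rcons last_rcons size_rcons.
move=> /andP[pq ex] /andP[xS aq].
case: k => [//|k] /= sqk; rewrite !inE xS /=; apply/orP; right.
by apply/existsP; exists (last v q); rewrite ex andbT IHq.
Qed.

End Neighbourhood.

Section Rank.
Variables (T : finType) (e : rel T) (r m : nat).
Hypothesis rank_finite : forall v : T, finite_rank e r m v.

Definition rank (v : T) : nat := ex_minn (rank_finite v).

Lemma rank_separator v :
  exists2 S : {set T}, (v \notin S) && (#|S| <= m) &
    forall u, u \in nbhd_del e S r v :\ v -> rank u < rank v.
Proof.
have rank_min u i : u \in ranked e r m i -> rank u <= i.
  by rewrite /rank; case: ex_minnP => j _ + ui => /(_ i ui).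
rewrite /rank; case: ex_minnP => -[|i]; first by rewrite inE.
rewrite /= inE => /orP[vi /(_ i vi)|]; first by rewrite ltnn.
rewrite inE => /existsP[S /and3P[vS cardS /subsetP sub]] _.
by exists S; rewrite ?vS // => u /sub /rank_min.
Qed.

End Rank.

Lemma ord_le_sorting_perm (T : finType) (f : T -> nat) :
  exists sigma : {perm T}, forall v w, ord_le sigma v w -> f v <= f w.
Proof.
pose s := sort (fun x y => f x <= f y) (enum T).
have s_enum : perm_eq s (enum T) by rewrite perm_sort.
have s_all x : x \in s by rewrite (perm_mem s_enum) mem_enum.
have index_lt x : index x s < #|T|.
  by rewrite cardE -(perm_size s_enum) index_mem.
pose g x := enum_val (Ordinal (index_lt x)).
have g_inj : injective g.
  move=> x y /(congr1 enum_rank); rewrite !enum_valK => -[idx].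
  by rewrite -(nth_index x (s_all x)) idx nth_index.
exists (perm g_inj) => v w; rewrite /ord_le !permE !enum_valK /= => le_vw.
have s_sorted : sorted (fun x y => f x <= f y) s.
  by apply: sort_sorted => x y; exact: leq_total.
have le_trans : transitive (fun x y => f x <= f y).
  by move=> x y z; exact: leq_trans.
have := sorted_leq_nth le_trans (fun x => leqnn (f x)) v s_sorted.
move=> /(_ (index v s) (index w s)); rewrite !nth_index //.
by apply; rewrite ?inE ?index_mem.
Qed.

Lemma size_le_card_hitting (T : finType) (v : T) (S : {set T})
    (s : seq (seq T)) :
  v \notin S -> all (has (mem S)) s ->
  (forall i j x, i < j < size s ->
     x \in nth [::] s i -> x \in nth [::] s j -> x = v) ->
  size s <= #|S|.
Proof.
move=> vS /(all_nthP [::]) hit disj.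
pose g (i : 'I_(size s)) := odflt v [pick x in S | x \in nth [::] s i].
have gP i : (g i \in S) && (g i \in nth [::] s i).
  rewrite /g; case: pickP => [x //|none].
  have /hasP[x xi xS] := hit i (ltn_ord i).
  by have := none x; rewrite xi andbT => /negP[].
have g_inj : injective g.
  suff lt_neq (i j : 'I_(size s)) : i < j -> g i != g j.
    move=> i j gij; apply/val_inj; case: (ltngtP i j) => // lt;
      [have := lt_neq i j lt | have := lt_neq j i lt]; by rewrite gij eqxx.
  move=> lt_ij; apply: contraL (gP i) => /eqP gij.
  have gi : g i \in nth [::] s i by case/andP: (gP i).
  have gj : g i \in nth [::] s j by rewrite gij; case/andP: (gP j).
  by rewrite (disj i j (g i)) ?lt_ij ?ltn_ord // (negbTE vS).
rewrite -[size s]card_ord -(card_imset _ g_inj) subset_leq_card //.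
by apply/subsetP => _ /imsetP[i _ ->]; case/andP: (gP i).
Qed.

Section BackPaths.
Variables (T : finType) (e : rel T) (sigma : {perm T}) (r : nat) (v : T).
Variable S : {set T}.
Hypothesis nbhd_before :
  forall u, u \in nbhd_del e S r v :\ v -> ~~ ord_le sigma v u.

Lemma back_path_meets p : back_path e sigma r v p -> has (mem S) p.
Proof.
case: p => [//|x q] /and5P[/eqP-> /andP[q_gt0 q_le] pq uq ord_last] /=.
apply: contraLR ord_last => /norP[_ noS]; apply: nbhd_before.
have last_neq : last v q != v.
  case: q q_gt0 uq {pq q_le noS} => // y q _ /andP[vq _].
  by apply: contraNneq vq => /= <-; exact: mem_last.
rewrite in_setD1 last_neq path_last_nbhd_del //.
by apply/allP => u u_q; apply: contra noS => uS; apply/hasP; exists u.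
Qed.

Lemma backconn_le_card : v \notin S -> backconn e sigma r v <= #|S|.
Proof.
move=> vS; apply/bigmax_leqP => n /asboolP[s [<- back disj]].
apply: size_le_card_hitting vS _ disj.
by apply/allP => p /(allP back); exact: back_path_meets.
Qed.

End BackPaths.

Theorem lemma3p7 (T : finType) (e : rel T) (r m : nat) :
  simple_graph e -> (1 <= r)%N ->
  (forall v : T, finite_rank e r m v) ->
  (adm e r <= m)%N.
Proof.
move=> _ _ rank_finite.
have [sigma rank_mono] := ord_le_sorting_perm (rank rank_finite).
apply: leq_trans (bigminn_leq _ _ sigma) _; apply/bigmax_leqP => v _.
have [S /andP[vS cardS] sep] := rank_separator rank_finite v.
apply: leq_trans cardS; apply: backconn_le_card vS => u /sep.
by rewrite ltnNge; apply: contra; exact: rank_mono.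
Qed.
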